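(* If $(a,b)\in R_3$, then $J(a,b)\ge \frac{9+8\sqrt{10}}{215}$.
   Context: For $(a,b)\in\mathbb R^2$ define $f_{a,b}(x_1,x_2)=[b+a(x_1+x_2)+x_1x_2](2-x_1-x_2)$. Let $X_1=\{(x_1,x_2):-1\le x_1\le 0,\ -x_1\le x_2\le 1\}$ and $X_2=\{(x_1,x_2):-1\le x_1\le0,\ x_1\le x_2\le -x_1\}$. Let $\chi_{a,b}=\max_{X_1\cup X_2}f_{a,b}$, $m_{a,b}=\min_{X_1\cup X_2}f_{a,b}$, $R=\{(a,b)\in\mathbb R^2: m_{a,b}>0\}$, and for $(a,b)\in R$ let $J(a,b)=\frac{\chi_{a,b}-m_{a,b}}{\chi_{a,b}+m_{a,b}}$. Whenever $(1-2a)^2\ge3(b-2a)$ let $t_-=\frac{2a-1-\sqrt{(1-2a)^2-3(b-2a)}}{3/2}$. Let $R_3=\{(a,b)\in R:(1-2a)^2\ge3(b-2a)>0,\ t_-\in[0,2]\}$. *)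

From Stdlib Require Import Reals Lra.
Open Scope R_scope.

Definition f (a b x1 x2 : R) : R :=
  (b + a * (x1 + x2) + x1 * x2) * (2 - x1 - x2).

Definition X1 (x1 x2 : R) : Prop := -1 <= x1 <= 0 /\ - x1 <= x2 <= 1.
Definition X2 (x1 x2 : R) : Prop := -1 <= x1 <= 0 /\ x1 <= x2 <= - x1.
Definition X (x1 x2 : R) : Prop := X1 x1 x2 \/ X2 x1 x2.

Definition is_max_f (a b chi : R) : Prop :=
  (exists x1 x2, X x1 x2 /\ f a b x1 x2 = chi) /\
  (forall x1 x2, X x1 x2 -> f a b x1 x2 <= chi).

Definition is_min_f (a b m : R) : Prop :=
  (exists x1 x2, X x1 x2 /\ f a b x1 x2 = m) /\
  (forall x1 x2, X x1 x2 -> m <= f a b x1 x2).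

Definition J (chi m : R) : R := (chi - m) / (chi + m).

Definition tminus (a b : R) : R :=
  (2 * a - 1 - sqrt ((1 - 2 * a) ^ 2 - 3 * (b - 2 * a))) / (3 / 2).

Definition in_R3 (a b m : R) : Prop :=
  0 < m /\
  3 * (b - 2 * a) <= (1 - 2 * a) ^ 2 /\ 0 < 3 * (b - 2 * a) /\
  0 <= tminus a b <= 2.

(* Put u = 2a - 1 and t = t_-.  Unfolding t_- gives b = 2a + ut - 3t²/4 and 3t <= 2u, so
   f_{a,b} becomes a polynomial in (t, u, x1, x2).  The maximum chi is at least the value at the
   diagonal point (-t/2, -t/2), the minimum m at most the values at the corners (-1,-1), (-1,1)
   and (0,1) of the domain, and J >= (9 + 8√10)/215 is equivalent to 243 chi >= (272 + 20√10) m.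
   It therefore suffices that, for 0 <= t <= 2 and 3t <= 2u, the slack
   243 f(-t/2,-t/2) - (272 + 20√10) f(c) is nonnegative for one corner c.  Each slack is affine
   in u; where two corners tie it factors through 9t - 14 + 4√10, which vanishes at the extremal
   parameter t = (14 - 4√10)/9, and away from the tie the sign of its u-slope decides. *)

From Stdlib Require Import Reals Lra Nsatz.
Open Scope R_scope.

Definition diag_val t u := 2 * (2 + t) * (2 - t - t ^ 2) + 2 * u * (2 + t) ^ 2.
Definition corner1 t u := 16 + 16 * t * u - 12 * t ^ 2.
Definition corner2 t u := 8 * u + 8 * t * u - 6 * t ^ 2.
Definition corner3 t u := 6 + 6 * u + 4 * t * u - 3 * t ^ 2.

Lemma tminus_param a b :
  3 * (b - 2 * a) <= (1 - 2 * a) ^ 2 ->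
  b = 2 * a + (2 * a - 1) * tminus a b - 3 / 4 * tminus a b ^ 2 /\
  3 * tminus a b <= 2 * (2 * a - 1).
Proof.
  intros Hdisc; unfold tminus.
  set (s := sqrt _).
  assert (Hs : s * s = (1 - 2 * a) ^ 2 - 3 * (b - 2 * a)) by (apply sqrt_sqrt; lra).
  assert (Hs0 : 0 <= s) by apply sqrt_pos.
  split; [nra | lra].
Qed.

Lemma f_at_test_points a b t :
  b = 2 * a + (2 * a - 1) * t - 3 / 4 * t ^ 2 ->
  4 * f a b (- t / 2) (- t / 2) = diag_val t (2 * a - 1) /\
  4 * f a b (-1) (-1) = corner1 t (2 * a - 1) /\
  4 * f a b (-1) 1 = corner2 t (2 * a - 1) /\
  4 * f a b 0 1 = corner3 t (2 * a - 1).
Proof.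
  intros ->; unfold f, diag_val, corner1, corner2, corner3; repeat split; field.
Qed.

Lemma sqrt10_bounds r : r * r = 10 -> 0 < r -> 3.162 < r < 3.1623.
Proof. intros; split; nra. Qed.

Section Slacks.

Variable r : R.
Hypothesis r_sq : r * r = 10.

Definition slack (corner : R -> R -> R) t u :=
  243 * diag_val t u - (272 + 20 * r) * corner t u.

Definition switch t := 9 * t - 14 + 4 * r.

Definition q12 t :=
  -440 - 80 * r + 244 * t + 64 * t * r - 66 * t ^ 2 - 12 * t ^ 2 * r + 27 * t ^ 3.
Definition q23 t :=
  96 + 96 * r - 120 * t + 96 * t * r - 192 * t ^ 2 + 24 * t ^ 2 * r - 54 * t ^ 3.

(* [slope_i t] is the coefficient of u in [slack corner_i t u]. *)
Definition slope1 t := 1944 - 2408 * t - 320 * t * r + 486 * t ^ 2.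
Definition slope2 t := -232 - 160 * r - 232 * t - 160 * t * r + 486 * t ^ 2.
Definition slope3 t := 312 - 120 * r + 856 * t - 80 * t * r + 486 * t ^ 2.

Lemma slack_tie12 t u :
  8 * (1 - t) * slack corner1 t u =
    4 * switch t * q12 t + slope1 t * (corner2 t u - corner1 t u) /\
  8 * (1 - t) * slack corner2 t u =
    4 * switch t * q12 t + slope2 t * (corner2 t u - corner1 t u).
Proof.
  unfold slack, switch, q12, slope1, slope2, diag_val, corner1, corner2.
  cbn [pow]; split; nsatz.
Qed.

Lemma slack_tie23 t u :
  (2 + 4 * t) * slack corner2 t u =
    switch t * q23 t + slope2 t * (corner2 t u - corner3 t u) /\
  (2 + 4 * t) * slack corner3 t u =
    switch t * q23 t + slope3 t * (corner2 t u - corner3 t u).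
Proof.
  unfold slack, switch, q23, slope2, slope3, diag_val, corner2, corner3.
  cbn [pow]; split; nsatz.
Qed.

Hypothesis r_pos : 0 < r.

Lemma slack1_nonneg t u :
  0 <= t -> switch t <= 0 -> corner1 t u <= corner2 t u -> 0 <= slack corner1 t u.
Proof.
  intros Ht Hsw Hc; pose proof (sqrt10_bounds r r_sq r_pos).
  destruct (slack_tie12 t u) as [E _].
  unfold switch in *.
  assert (Hq : q12 t <= 0) by (unfold q12; nra).
  assert (Hs : 0 <= slope1 t) by (unfold slope1; nra).
  apply (Rmult_le_reg_l (8 * (1 - t))); [lra |].
  rewrite Rmult_0_r, E; nra.
Qed.

Lemma slack2_nonneg_left t u :
  0 <= t -> switch t <= 0 -> corner2 t u <= corner1 t u -> 0 <= slack corner2 t u.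
Proof.
  intros Ht Hsw Hc; pose proof (sqrt10_bounds r r_sq r_pos).
  destruct (slack_tie12 t u) as [_ E].
  unfold switch in *.
  assert (Hq : q12 t <= 0) by (unfold q12; nra).
  assert (Hs : slope2 t <= 0) by (unfold slope2; nra).
  apply (Rmult_le_reg_l (8 * (1 - t))); [lra |].
  rewrite Rmult_0_r, E; nra.
Qed.

Lemma slack2_nonneg_right t u :
  t <= 1 -> 0 <= switch t -> corner2 t u <= corner3 t u -> 0 <= slack corner2 t u.
Proof.
  intros Ht Hsw Hc; pose proof (sqrt10_bounds r r_sq r_pos).
  destruct (slack_tie23 t u) as [E _].
  unfold switch in *.
  assert (Hq : 0 <= q23 t) by (unfold q23; nra).
  assert (Hs : slope2 t <= 0) by (unfold slope2; nra).
  apply (Rmult_le_reg_l (2 + 4 * t)); [lra |].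
  rewrite Rmult_0_r, E; nra.
Qed.

Lemma slack3_nonneg_mid t u :
  t <= 1 -> 0 <= switch t -> corner3 t u <= corner2 t u -> 0 <= slack corner3 t u.
Proof.
  intros Ht Hsw Hc; pose proof (sqrt10_bounds r r_sq r_pos).
  destruct (slack_tie23 t u) as [_ E].
  unfold switch in *.
  assert (Hq : 0 <= q23 t) by (unfold q23; nra).
  assert (Hs : 0 <= slope3 t) by (unfold slope3; nra).
  apply (Rmult_le_reg_l (2 + 4 * t)); [lra |].
  rewrite Rmult_0_r, E; nra.
Qed.

Lemma slack3_nonneg_right t u : 1 <= t <= 2 -> 3 * t <= 2 * u -> 0 <= slack corner3 t u.
Proof.
  intros Ht Hu; pose proof (sqrt10_bounds r r_sq r_pos).
  assert (E : slack corner3 t u = slack corner3 t 0 + slope3 t * u)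
    by (unfold slack, slope3, diag_val, corner3; ring).
  assert (Hs : 0 <= slope3 t) by (unfold slope3; nra).
  assert (Hsu : slope3 t * (3 * t) <= slope3 t * (2 * u)) by (apply Rmult_le_compat_l; lra).
  rewrite E; unfold slack, slope3, diag_val, corner3 in *; nra.
Qed.

Lemma slack_nonneg_at_some_corner t u : 0 <= t <= 2 -> 3 * t <= 2 * u ->
  0 <= slack corner1 t u \/ 0 <= slack corner2 t u \/ 0 <= slack corner3 t u.
Proof.
  intros Ht Hu.
  destruct (Rle_lt_dec (switch t) 0) as [Hsw | Hsw].
  - destruct (Rle_lt_dec (corner1 t u) (corner2 t u)).
    + left; apply slack1_nonneg; lra.
    + right; left; apply slack2_nonneg_left; lra.
  - destruct (Rle_lt_dec t 1).
    + destruct (Rle_lt_dec (corner2 t u) (corner3 t u)).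
      * right; left; apply slack2_nonneg_right; lra.
      * right; right; apply slack3_nonneg_mid; lra.
    + right; right; apply slack3_nonneg_right; lra.
Qed.

Lemma diag_val_ge_min_corner t u M : 0 <= t <= 2 -> 3 * t <= 2 * u ->
  M <= corner1 t u -> M <= corner2 t u -> M <= corner3 t u ->
  (272 + 20 * r) * M <= 243 * diag_val t u.
Proof.
  intros Ht Hu H1 H2 H3.
  assert (HK : 0 <= 272 + 20 * r) by lra.
  destruct (slack_nonneg_at_some_corner t u Ht Hu) as [H | [H | H]]; unfold slack in H;
    [ pose proof (Rmult_le_compat_l _ _ _ HK H1)
    | pose proof (Rmult_le_compat_l _ _ _ HK H2)
    | pose proof (Rmult_le_compat_l _ _ _ HK H3) ]; lra.
Qed.

End Slacks.

Lemma sqrt10_sq : sqrt 10 * sqrt 10 = 10.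
Proof. apply sqrt_sqrt; lra. Qed.

Lemma sqrt10_pos : 0 < sqrt 10.
Proof. apply sqrt_lt_R0; lra. Qed.

(* At r = √10, (272 + 20r)/243 = (224 + 8r)/(206 - 8r), the value of chi/m for which
   (chi - m)/(chi + m) = (9 + 8r)/215. *)
Lemma J_ge_of_ratio chi m : 0 < m ->
  (272 + 20 * sqrt 10) * m <= 243 * chi -> J chi m >= (9 + 8 * sqrt 10) / 215.
Proof.
  intros Hm Hratio.
  pose proof sqrt10_sq as Hr; pose proof (sqrt10_bounds _ sqrt10_sq sqrt10_pos).
  set (r := sqrt 10) in *.
  assert (Hchi : m < chi) by nra.
  assert (Hprod : 0 <= (206 - 8 * r) * (243 * chi - (272 + 20 * r) * m))
    by (apply Rmult_le_pos; lra).
  apply Rle_ge, (Rmult_le_reg_r (215 * (chi + m))); [lra |].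
  unfold J; replace ((chi - m) / (chi + m) * (215 * (chi + m))) with (215 * (chi - m))
    by (field; lra).
  replace ((9 + 8 * r) / 215 * (215 * (chi + m))) with ((9 + 8 * r) * (chi + m)) by field.
  nra.
Qed.

Theorem propositionA9 (a b chi m : R) :
  is_max_f a b chi -> is_min_f a b m -> in_R3 a b m ->
  J chi m >= (9 + 8 * sqrt 10) / 215.
Proof.
  intros [_ Hchi] [_ Hm] [Hm0 [Hdisc [_ Ht]]].
  destruct (tminus_param a b Hdisc) as [Hb Hu].
  set (t := tminus a b) in *.
  destruct (f_at_test_points a b t Hb) as [Ed [E1 [E2 E3]]].
  assert (Fd : f a b (- t / 2) (- t / 2) <= chi) by (apply Hchi; right; unfold X2; lra).
  assert (F1 : m <= f a b (-1) (-1)) by (apply Hm; right; unfold X2; lra).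
  assert (F2 : m <= f a b (-1) 1) by (apply Hm; left; unfold X1; lra).
  assert (F3 : m <= f a b 0 1) by (apply Hm; left; unfold X1; lra).
  pose proof (diag_val_ge_min_corner _ sqrt10_sq sqrt10_pos t (2 * a - 1) (4 * m) Ht Hu
                ltac:(lra) ltac:(lra) ltac:(lra)).
  apply J_ge_of_ratio; lra.
Qed.
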